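(* Let $p$ be a prime and $A\subseteq\mathbb{F}_p$ satisfy $A-A\doteq\mathcal{R}_p$. Put $n:=|A|$ and fix any quadratic non-residue $\nu\in\mathcal{N}_p$. Then the $n^2$ sums $a'+\nu a''$ with $a',a''\in A$ are pairwise distinct, and the set $D:=\{a'+\nu a''\colon a',a''\in A\}$ is a $(p,n^2,n(n+1)/2)$-difference set in the additive group of $\mathbb{F}_p$.
   Context: $\mathcal{R}_p$ and $\mathcal{N}_p$ are the sets of quadratic residues and quadratic non-residues in $\mathbb{F}_p^\times$. $A-A\doteq S$ means: every element of $S$ has exactly one representation as $a'-a''$ with $a',a''\in A$, and every difference $a'-a''$ with $a'\ne a''$ in $A$ lies in $S$. For positive integers $v,k,\lambda$, a $(v,k,\lambda)$-difference set in an abelian group of order $v$ is a $k$-element subset $D$ such that every nonzero group element has exactly $\lambda$ representations as $d'-d''$ with $d',d''\in D$. *)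

From HB Require Import structures.
From mathcomp Require Import all_boot all_order all_algebra.
Set Implicit Arguments. Unset Strict Implicit. Unset Printing Implicit Defensive.
Import GRing.Theory.
Local Open Scope ring_scope.

Definition qres (p : nat) : {set 'F_p} :=
  [set x : 'F_p | (x != 0) && [exists y : 'F_p, y ^+ 2 == x]].
Definition qnonres (p : nat) : {set 'F_p} :=
  [set x : 'F_p | (x != 0) && ~~ [exists y : 'F_p, y ^+ 2 == x]].

Definition nreps (G : finZmodType) (D : {set G}) (g : G) : nat :=
  #|[set u in setX D D | u.1 - u.2 == g]|.

Definition diff_exact (G : finZmodType) (A S : {set G}) : Prop :=
  (forall s, s \in S -> nreps A s = 1%N) /\
  (forall a1 a2, a1 \in A -> a2 \in A -> a1 != a2 -> a1 - a2 \in S).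

Definition is_difference_set (G : finZmodType) (v k lam : nat) (D : {set G}) : Prop :=
  [/\ (0 < v)%N /\ (0 < k)%N /\ (0 < lam)%N, #|G| = v, #|D| = k &
      forall g : G, g != 0 -> nreps D g = lam].

From mathcomp Require Import all_boot all_algebra finfield ring zify.
Set Implicit Arguments.
Unset Strict Implicit.
Unset Printing Implicit Defensive.
Import GRing.Theory.
Local Open Scope ring_scope.

(* Let m(x) be the number of representations of x in A - A; the hypothesis says
   m(x) = |A| [x = 0] + [x \in R_p].  Two sums a' + nu a'' with distinct second
   coordinates cannot coincide, since a residue difference would equal nu times a
   residue difference, a non-residue.  Hence the number of representations of g in
   D - D is the sum of m(x) m(y) over x + nu y = g.  This is invariant under g |-> s g
   for residues s (because m is) and under g |-> nu g (swap x and y and use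
   nu^2 \in R_p); as every non-residue lies in nu R_p, it is a constant lambda on
   nonzero g.  Counting all pairs, n^4 = n^2 + (p - 1) lambda for D and
   n^2 = n + |R_p| = n + (p - 1)/2 for A, whence lambda = n (n + 1)/2. *)

Section Representations.
Variable G : finZmodType.
Implicit Types (A D S : {set G}) (g : G).

Lemma nrepsE D g : nreps D g = (\sum_(x in D) \sum_(y in D) (x - y == g)%R)%N.
Proof.
rewrite /nreps -sum1_card pair_big_dep /= big_mkcond [RHS]big_mkcond /=.
apply: eq_bigr => -[x y] _; rewrite !inE /=.
by case: (x \in D); case: (y \in D); case: (x - y == g).
Qed.

Lemma sum_nreps D (h : G -> nat) :
  (\sum_(x in D) \sum_(y in D) h (x - y)%R = \sum_g nreps D g * h g)%N.
Proof.
under [RHS]eq_bigr => g _ do rewrite nrepsE big_distrl.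
under [RHS]eq_bigr => g _ do under eq_bigr => x _ do rewrite big_distrl.
rewrite [RHS]exchange_big; apply: eq_bigr => x _.
rewrite [RHS]exchange_big; apply: eq_bigr => y _.
rewrite (bigD1 (x - y)) //= eqxx mul1n big1 ?addn0 // => g /negbTE ne.
by rewrite eq_sym ne.
Qed.

Lemma nreps_total D : (\sum_g nreps D g = #|D| ^ 2)%N.
Proof.
under eq_bigr do rewrite -[nreps D _]muln1.
by rewrite -(sum_nreps D (fun=> 1%N)) !sum_nat_const muln1 -mulnn.
Qed.

Lemma nreps0 D : nreps D 0 = #|D|.
Proof.
rewrite nrepsE -sum1_card; apply: eq_bigr => x xD.
rewrite (bigD1 x) //= subrr eqxx big1 // => y /andP[_ yx].
by rewrite subr_eq0 eq_sym (negbTE yx).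
Qed.

Lemma card_const_nreps D (c : nat) :
  (forall g, g != 0 -> nreps D g = c) -> (#|D| ^ 2 = #|D| + #|G|.-1 * c)%N.
Proof.
move=> Dc; rewrite -nreps_total (bigD1 0) //= nreps0 (eq_bigr _ Dc).
by rewrite sum_nat_const cardC1.
Qed.

Lemma nreps_diff_exact A S :
  diff_exact A S -> forall g, nreps A g = if g == 0 then #|A| else g \in S.
Proof.
case=> AS1 ASsub g; have [->|g0] := eqVneq g 0; first exact: nreps0.
have [/AS1 //|gS] := boolP (g \in S).
apply/eqP; rewrite /nreps cards_eq0; apply/eqP/setP => -[a b]; rewrite !inE /=.
apply/negP => /andP[/andP[aA bA] /eqP abg].
have ab : a != b by apply: contra_neq g0 => ab; rewrite -abg ab subrr.
by move: (ASsub a b aA bA ab); rewrite abg (negbTE gS).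
Qed.

Lemma card_diff_exact A S :
  diff_exact A S -> 0 \notin S -> (#|S| + #|A| = #|A| ^ 2)%N.
Proof.
move=> AS S0; rewrite -nreps_total (bigD1 0) //= nreps0 addnC; congr (_ + _)%N.
rewrite -sum1_card [RHS]big_mkcond [in LHS]big_mkcond /=; apply: eq_bigr => g _.
rewrite (nreps_diff_exact AS); have [->|//] := eqVneq g 0.
by rewrite (negbTE S0).
Qed.

Variable f : G -> G.
Hypothesis fB : {morph f : x y / x - y}.
Variable A : {set G}.
Hypothesis sum_injective : forall a1 a2 b1 b2,
  a1 \in A -> a2 \in A -> b1 \in A -> b2 \in A -> a1 + f a2 = b1 + f b2 -> a1 = b1 /\ a2 = b2.

Lemma big_sumset (F : G -> nat) :
  (\sum_(d in [set (a1 + f a2)%R | a1 in A, a2 in A]) F d =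
   \sum_(a1 in A) \sum_(a2 in A) F (a1 + f a2)%R)%N.
Proof.
rewrite curry_imset2X big_imset /=; last first.
  move=> [a1 a2] [b1 b2] /setXP[a1A a2A] /setXP[b1A b2A] /= e.
  by have [-> ->] := sum_injective a1A a2A b1A b2A e.
by rewrite [RHS]pair_big_dep; apply: eq_big => -[x y] //=; rewrite inE.
Qed.

Lemma nreps_sumset g :
  nreps [set a1 + f a2 | a1 in A, a2 in A] g =
  (\sum_x \sum_y nreps A x * nreps A y * (x + f y == g)%R)%N.
Proof.
rewrite nrepsE big_sumset.
under eq_bigr do under eq_bigr do rewrite big_sumset.
under eq_bigr => a1 _ do rewrite exchange_big /=.
have diffE a1 a2 b1 b2 : (a1 + f b1) - (a2 + f b2) = (a1 - a2) + f (b1 - b2).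
  by rewrite fB opprD addrACA.
under eq_bigr do under eq_bigr do under eq_bigr do under eq_bigr do rewrite diffE.
under eq_bigr do under eq_bigr do rewrite (sum_nreps A (fun y => _ + f y == g)).
rewrite (sum_nreps A (fun x => \sum_y nreps A y * (x + f y == g)%R)%N).
by apply: eq_bigr => x _; rewrite big_distrr; apply: eq_bigr => y _; rewrite /= mulnA.
Qed.

End Representations.

Section QuadraticResidues.
Variable p : nat.
Hypothesis p_pr : prime p.
Implicit Types (s x nu g : 'F_p).

Lemma qresP x : reflect (x != 0 /\ exists y, y ^+ 2 = x) (x \in qres p).
Proof.
rewrite inE; apply: (iffP andP) => -[x0 sq]; split => //.
  by case/existsP: sq => y /eqP; exists y.
by case: sq => y yx; apply/existsP; exists y; apply/eqP.
Qed.

Lemma qnonresE x : (x \in qnonres p) = (x != 0) && (x \notin qres p).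
Proof. by rewrite !inE; case: (x != 0). Qed.

Lemma qres0 : 0 \notin qres p.
Proof. by rewrite inE eqxx. Qed.

Lemma qres1 : 1 \in qres p.
Proof. by apply/qresP; split; [exact: oner_neq0 | exists 1; exact: expr1n]. Qed.

Lemma qres_sqr x : x != 0 -> x ^+ 2 \in qres p.
Proof. by move=> x0; apply/qresP; split; [exact: expf_neq0 | exists x]. Qed.

Lemma qresM s x : s \in qres p -> (s * x \in qres p) = (x \in qres p).
Proof.
case/qresP => s0 [t ts]; have t0 : t != 0 by apply: contraNneq s0 => t0; rewrite -ts t0 expr0n.
apply/qresP/qresP => [[sx0 [y yE]] | [x0 [y yE]]].
  split; first by apply: contraNneq sx0 => ->; rewrite mulr0.
  by exists (y / t); rewrite expr_div_n yE ts mulrAC divff ?mul1r.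
by split; [rewrite mulf_neq0 | exists (t * y); rewrite exprMn ts yE].
Qed.

Lemma qnonres_odd nu : nu \in qnonres p -> odd p.
Proof.
rewrite qnonresE => /andP[nu0 nuN]; case: (even_prime p_pr) => // p2.
case/negP: nuN; apply/qresP; split => //; exists nu.
have := expf_card nu; rewrite card_Fp // => nup.
(* [p] occurs in the type of [nu], so [p2] cannot be used to rewrite [nup]. *)
exact: etrans (congr1 (GRing.exp nu) (esym p2)) nup.
Qed.

Lemma card_qres : odd p -> p.-1 = (2 * #|qres p|)%N.
Proof.
move=> p_odd; have two0 : (2%:R : 'F_p) != 0.
  rewrite -(dvdn_pcharf (pchar_Fp p_pr)); apply: contraL p_odd => /(dvdn_leq (ltn0Sn 1)).
  by rewrite leq_eqVlt ltnS leqNgt prime_gt1 // orbF => /eqP->.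
have <- : #|[set~ (0 : 'F_p)]| = p.-1 by rewrite cardsC1 card_Fp.
rewrite -sum1_card.
rewrite (partition_big (fun x => x ^+ 2) (mem (qres p))) /=; last first.
  by move=> x; rewrite in_setC1 => /qres_sqr.
rewrite mulnC -sum_nat_const; apply: eq_bigr => r /qresP[r0 [t tr]].
have t0 : t != 0 by apply: contraNneq r0 => t0; rewrite -tr t0 expr0n.
have tNt : t != - t.
  apply: contraNneq t0 => tNt; apply/eqP; apply: (mulfI two0).
  by rewrite mulr0 mulr_natl mulr2n {2}tNt subrr.
transitivity #|[set t; - t]|; last by rewrite cards2 tNt.
rewrite -sum1_card; apply: eq_bigl => x.
rewrite !inE -tr eqf_sqr; have [->|//] := eqVneq x 0.
by rewrite eq_sym (negbTE t0) eq_sym oppr_eq0 (negbTE t0).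
Qed.

Lemma qnonres_eq_mul_qres nu g : nu \in qnonres p -> g \in qnonres p ->
  exists2 r, r \in qres p & g = nu * r.
Proof.
move=> nuN gN; have := nuN; rewrite qnonresE => /andP[nu0 nuR].
have nuRsub : [set nu * r | r in qres p] \subset qnonres p.
  apply/subsetP => _ /imsetP[r rR ->]; have /qresP[r0 _] := rR.
  by rewrite qnonresE mulf_neq0 // mulrC qresM.
have cardN : #|qnonres p| = #|qres p|.
  have := cardsID (qres p) [set~ (0 : 'F_p)].
  rewrite cardsC1 card_Fp // card_qres ?(qnonres_odd nuN) //.
  have -> : [set~ 0] :&: qres p = qres p.
    by apply/setIidPr/subsetP => x /qresP[x0 _]; rewrite in_setC1.
  have -> : [set~ 0] :\: qres p = qnonres p.
    by apply/setP => x; rewrite qnonresE in_setD in_setC1 andbC.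
  by rewrite mul2n -addnn => /addnI.
have := (subset_leqif_cards nuRsub).2.
rewrite card_imset; last exact: mulfI.
rewrite cardN eqxx => /esym/eqP NE.
by move: gN; rewrite -NE => /imsetP[r rR ->]; exists r.
Qed.

End QuadraticResidues.

Lemma lambda_from_counts (n r c : nat) : (0 < r)%N -> (r + n = n ^ 2)%N ->
  ((n ^ 2) ^ 2 = n ^ 2 + 2 * r * c)%N -> c = (n * (n + 1) %/ 2)%N.
Proof.
move=> r0 rn ncount; have : (r * (2 * c) = r * (n * (n + 1)))%N by nia.
by move/eqP; rewrite eqn_pmul2l // => /eqP <-; rewrite mulKn.
Qed.

Section Sumset.
Variables (p : nat) (A : {set 'F_p}) (nu : 'F_p).
Hypotheses (p_pr : prime p) (A_diff : diff_exact A (qres p)) (nuN : nu \in qnonres p).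

Lemma nu_neq0 : nu != 0.
Proof. by move: nuN; rewrite qnonresE => /andP[]. Qed.

Lemma nreps_qresM s x : s \in qres p -> nreps A (s * x) = nreps A x.
Proof.
move=> sR; have /qresP[s0 _] := sR.
by rewrite !(nreps_diff_exact A_diff) mulf_eq0 (negbTE s0) qresM.
Qed.

Lemma sumset_inj a1 a2 b1 b2 : a1 \in A -> a2 \in A -> b1 \in A -> b2 \in A ->
  a1 + nu * a2 = b1 + nu * b2 -> a1 = b1 /\ a2 = b2.
Proof.
move=> a1A a2A b1A b2A e; have [a2b2|a2b2] := eqVneq a2 b2.
  by split => //; move: e; rewrite a2b2 => /addIr.
have b2a2R := A_diff.2 b2 a2 b2A a2A (contra_neq esym a2b2).
have /qresP[b2a2_0 _] := b2a2R.
have e1 : a1 - b1 = nu * (b2 - a2).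
  by rewrite -[a1](addrK (nu * a2)) e; ring.
have a1b1 : a1 != b1 by rewrite -subr_eq0 e1 mulf_neq0 ?nu_neq0.
have := A_diff.2 a1 b1 a1A b1A a1b1; rewrite e1 mulrC qresM //.
by move: nuN; rewrite qnonresE => /andP[_ /negbTE ->].
Qed.

Definition sumset_reps g :=
  (\sum_x \sum_y nreps A x * nreps A y * (x + nu * y == g)%R)%N.

Lemma nreps_sumset_reps g :
  nreps [set a1 + nu * a2 | a1 in A, a2 in A] g = sumset_reps g.
Proof. exact: (nreps_sumset (mulrBr nu) sumset_inj). Qed.

Lemma sumset_reps_qresM s g : s \in qres p -> sumset_reps (s * g) = sumset_reps g.
Proof.
move=> sR; have /qresP[s0 _] := sR.
rewrite /sumset_reps (reindex_inj (mulfI s0)); apply: eq_bigr => x _.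
rewrite (reindex_inj (mulfI s0)); apply: eq_bigr => y _.
by rewrite !nreps_qresM // mulrCA -mulrDr (inj_eq (mulfI s0)).
Qed.

Lemma sumset_reps_nuM g : sumset_reps (nu * g) = sumset_reps g.
Proof.
have nu2R := qres_sqr nu_neq0; have /qresP[nu2_0 _] := nu2R.
rewrite /sumset_reps exchange_big; apply: eq_bigr => y _.
rewrite (reindex_inj (mulfI nu2_0)); apply: eq_bigr => x _.
rewrite nreps_qresM // [(nreps A x * _)%N]mulnC.
by rewrite -mulrA -mulrDr addrC (inj_eq (mulfI nu_neq0)).
Qed.

Lemma sumset_reps_const g : g != 0 -> sumset_reps g = sumset_reps 1.
Proof.
move=> g0; have [gR|gN] := boolP (g \in qres p).
  by rewrite -(sumset_reps_qresM 1 gR) mulr1.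
have gN' : g \in qnonres p by rewrite qnonresE g0.
have [r rR ->] := qnonres_eq_mul_qres p_pr nuN gN'.
by rewrite sumset_reps_nuM -(sumset_reps_qresM 1 rR) mulr1.
Qed.

End Sumset.

Theorem claim1 (p : nat) (A : {set 'F_p}) (nu : 'F_p) :
  prime p -> diff_exact A (qres p) -> nu \in qnonres p ->
  (forall a1 a2 b1 b2 : 'F_p, a1 \in A -> a2 \in A -> b1 \in A -> b2 \in A ->
     a1 + nu * a2 = b1 + nu * b2 -> a1 = b1 /\ a2 = b2) /\
  is_difference_set p (#|A| ^ 2)%N (#|A| * (#|A| + 1) %/ 2)%N
    [set a1 + nu * a2 | a1 in A, a2 in A].
Proof.
move=> p_pr A_diff nuN; set D := [set _ | _ in A, _ in A].
have inj := sumset_inj A_diff nuN.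
have cardD : #|D| = (#|A| ^ 2)%N.
  rewrite /D curry_imset2X card_in_imset ?cardsX ?mulnn //.
  by move=> [a1 a2] [b1 b2] /setXP[a1A a2A] /setXP[b1A b2A] /inj[] // -> ->.
have lambdaD g : g != 0 -> nreps D g = sumset_reps A nu 1.
  by move=> g0; rewrite /D nreps_sumset_reps ?sumset_reps_const.
have cardA := card_diff_exact A_diff (qres0 p).
have countD := card_const_nreps lambdaD.
rewrite cardD card_Fp // card_qres ?(qnonres_odd p_pr nuN) // in countD.
have qres_gt0 : (0 < #|qres p|)%N by apply/card_gt0P; exists 1; exact: qres1.
have A_gt0 : (0 < #|A|)%N.
  by rewrite lt0n; apply: contraTneq qres_gt0 => A0; move: cardA; rewrite A0 addn0 => ->.
have lambdaE := lambda_from_counts qres_gt0 cardA countD.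
split=> //; split.
- split; first exact: prime_gt0.
  by rewrite expn_gt0 A_gt0 divn_gt0 // -[2%N]/(1 * (1 + 1))%N leq_mul // leq_add2r.
- exact: card_Fp.
- exact: cardD.
- by move=> g g0; rewrite lambdaD // lambdaE.
Qed.
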